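(* Let $d$ be a positive integer and let $P = \{x\in\mathbb{R}^d : Ax \le \mathbf{1}\}$ (for a real matrix $A$ with $d$ columns, $\mathbf{1}$ the all-ones vector) satisfy $P\cap\mathbb{Z}^d = \lozenge_d$. Then $Q = \{(x,y)\in\mathbb{R}^{d+1} : A(x - y e_1)\le\mathbf{1},\ -1\le x_1+y\le 1\}$ satisfies $Q \cap \mathbb{Z}^{d+1} = \lozenge_{d+1}$.
   Context: $\lozenge_d = \{0,\pm e_1,\dots,\pm e_d\}\subseteq\mathbb{Z}^d$ is the discrete standard crosspolytope, with $e_i$ the standard unit vectors; in $\mathbb{R}^{d+1}$ a point is written $(x,y)$ with $x\in\mathbb{R}^d$, $y\in\mathbb{R}$, so $\lozenge_{d+1} = (\lozenge_d\times\{0\})\cup\{(0,\pm1)\}$. *)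

From HB Require Import structures.
From mathcomp Require Import all_boot all_order all_algebra.
From mathcomp Require Import reals.
Set Implicit Arguments. Unset Strict Implicit. Unset Printing Implicit Defensive.
Import Order.TTheory GRing.Theory Num.Theory.
Local Open Scope ring_scope.

Definition intpt (R : realType) (n : nat) (z : 'cV[int]_n) : 'cV[R]_n :=
  map_mx (fun k : int => k%:~R) z.

Definition inPoly (R : realType) (m d : nat) (A : 'M[R]_(m, d)) (x : 'cV[R]_d) : bool :=
  [forall i : 'I_m, (A *m x) i 0 <= 1].

Definition crosspoly (n : nat) (z : 'cV[int]_n) : bool :=
  (z == 0) || [exists i : 'I_n, (z == delta_mx i 0) || (z == - delta_mx i 0)].

From HB Require Import structures.
From mathcomp Require Import all_boot all_order all_algebra.
From mathcomp Require Import reals.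
From mathcomp Require Import zify.
Set Implicit Arguments.
Unset Strict Implicit.
Unset Printing Implicit Defensive.

Import Order.TTheory GRing.Theory Num.Theory.
Local Open Scope ring_scope.

(* On integer points the crosspolytope is the l1 unit ball, so P contains an
   integer point z exactly when ||z||_1 <= 1.  The integer point (z, w) lies in
   Q exactly when ||z - w e_1||_1 <= 1 and |z_1 + w| <= 1, i.e. when
   |z_1 - w| + r <= 1 and |z_1 + w| <= 1 with r the l1 norm of the remaining
   coordinates; for integers this is equivalent to |z_1| + |w| + r <= 1, which
   is ||(z, w)||_1 <= 1. *)

Section ColumnL1Norm.
Variables (R : numDomainType) (n : nat).
Implicit Types (z : 'cV[R]_n) (c : R).

Lemma sum_norm_scale_delta (i : 'I_n) c :
  \sum_j `|(c *: delta_mx i 0 : 'cV[R]_n) j 0| = `|c|.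
Proof.
rewrite (bigD1 i) //= big1 => [|j /negbTE ji]; first by rewrite !mxE !eqxx mulr1 addr0.
by rewrite !mxE ji mulr0 normr0.
Qed.

Lemma col_scale_delta z (i : 'I_n) :
  (forall j, j != i -> z j 0 = 0) -> z = z i 0 *: delta_mx i 0.
Proof.
move=> zj0; apply/matrixP => j k; rewrite ord1 !mxE.
by case: (eqVneq j i) => [-> | /zj0 ->]; rewrite ?eqxx /= ?mulr1 ?mulr0.
Qed.

Lemma sum_norm_subr_scale_delta z (i : 'I_n) c :
  \sum_j `|(z - c *: delta_mx i 0) j 0| = `|z i 0 - c| + \sum_(j | j != i) `|z j 0|.
Proof.
rewrite (bigD1 i) //= !mxE !eqxx mulr1; congr (_ + _).
by apply: eq_bigr => j /negbTE ji; rewrite !mxE ji mulr0 subr0.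
Qed.

Lemma sum_norm_col_mx1 z c :
  \sum_(j < n + 1) `|col_mx z c%:M j 0| = \sum_j `|z j 0| + `|c|.
Proof.
rewrite big_split_ord big_ord1 col_mxEd mxE mulr1n; congr (_ + _).
by apply: eq_bigr => j _; rewrite col_mxEu.
Qed.

End ColumnL1Norm.

Lemma int_norm_addr_le1 (a b : int) :
  a != 0 -> 0 <= b -> `|a| + b <= 1 -> ((a == 1) || (a == -1)) /\ b = 0.
Proof. lia. Qed.

(* [a - b] and [a + b] have the same parity, so if both lie in [-1, 1] they
   are either both 0 or both odd, and in the latter case [r = 0] and
   [|a| + |b| = 1]. *)
Lemma int_norm_subr_addr_le1 (a b r : int) : 0 <= r ->
  (`|a - b| + r <= 1) && (`|a + b| <= 1) = (`|a| + r + `|b| <= 1).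
Proof. by move=> r_ge0; apply/idP/idP; lia. Qed.

Lemma crosspolyE (n : nat) (z : 'cV[int]_n) :
  crosspoly z = (\sum_i `|z i 0| <= 1).
Proof.
apply/idP/idP.
- case/orP => [/eqP -> | /existsP [i /orP [] /eqP ->]].
  + by rewrite big1 // => i _; rewrite mxE.
  + by rewrite -[delta_mx i 0]scale1r sum_norm_scale_delta.
  + by rewrite -scaleN1r sum_norm_scale_delta normrN1.
have [/existsP [i zi] | /existsPn z0] := boolP [exists i, z i 0 != 0]; last first.
  by move=> _; apply/orP; left; apply/eqP/matrixP => j k; rewrite ord1 mxE; apply/eqP/negPn.
have norm_ge0 j : j != i -> 0 <= `|z j 0| by rewrite normr_ge0.
rewrite (bigD1 i) //= => /(int_norm_addr_le1 zi (sumr_ge0 _ norm_ge0)).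
case=> zi_pm1 /(psumr_eq0P norm_ge0) zj0.
have zj_eq0 j : j != i -> z j 0 = 0 by move/zj0/normr0P/eqP.
rewrite (col_scale_delta zj_eq0).
apply/orP; right; apply/existsP; exists i.
by case/orP: zi_pm1 => /eqP ->; rewrite ?scale1r ?scaleN1r eqxx ?orbT.
Qed.

Theorem lemma5p3 (R : realType) (d m : nat) (hd : (0 < d)%N) (A : 'M[R]_(m, d)) :
  (forall z : 'cV[int]_d, inPoly A (intpt R z) = crosspoly z) ->
  forall (z : 'cV[int]_d) (w : int),
    (inPoly A (intpt R z - (w%:~R : R) *: delta_mx (Ordinal hd) 0)
     && (-1 <= intpt R z (Ordinal hd) 0 + (w%:~R : R) <= 1))
    = crosspoly (col_mx z (w%:M : 'cV[int]_1)).
Proof.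
move=> inPolyE z w.
have -> : intpt R z - w%:~R *: delta_mx (Ordinal hd) 0
          = intpt R (z - w *: delta_mx (Ordinal hd) 0).
  by rewrite /intpt map_mxB map_mxZ map_delta_mx.
rewrite inPolyE /intpt mxE -ler_norml -intrD -intr_norm lerz1.
rewrite !crosspolyE sum_norm_col_mx1 sum_norm_subr_scale_delta.
rewrite [in RHS](bigD1 (Ordinal hd)) //=.
by apply: int_norm_subr_addr_le1; apply: sumr_ge0 => j _; apply: normr_ge0.
Qed.
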